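(* Let $m>a\geq 0$, $n>b\geq0$, $h\geq 0$ be integers with $h\leq (m-a)(n-b)-\max\{m-a,n-b\}$. Then $$\mathbb{E}^{\max}_{m\times n}(a,b,h)=\{\mathcal{E}'\cup\mathcal{I}\ \mid\ \mathcal{E}'\in\mathbb{E}^{\max}_{m\times n}(a,b,0),\ \mathcal{I}\subset([m]\times[n])\setminus\mathcal{E}',\ |\mathcal{I}|=h\},$$ i.e., every maximal correctable erasure pattern of $T_{m\times n}(a,b,h)$ is obtained by adding $h$ erasures to some maximal correctable pattern of $T_{m\times n}(a,b,0)$, and every such set is a maximal correctable pattern of $T_{m\times n}(a,b,h)$.
   Context: Positions of vectors in $\mathbb{F}^{mn}$ are identified with the grid $[m]\times[n]$, where $[k]=\{1,\dots,k\}$. For linear codes $\mathcal{C}_1\subseteq\mathbb{F}^m$, $\mathcal{C}_2\subseteq\mathbb{F}^n$ with generator matrices $\mathbf{G}_1,\mathbf{G}_2$, $\mathcal{C}_1\otimes\mathcal{C}_2$ is the row span of the Kronecker product $\mathbf{G}_1\otimes\mathbf{G}_2$. A code for the topology $T_{m\times n}(a,b,h)$ is a linear code over a finite field $\mathbb{F}$ with a parity-check matrix $\begin{pmatrix}\mathbf{H}_{\mathsf{local}}\\ \mathbf{H}_{\mathsf{global}}\end{pmatrix}$, where $\mathbf{H}_{\mathsf{local}}$ is a parity-check matrix of $\mathcal{C}_{\mathsf{col}}\otimes\mathcal{C}_{\mathsf{row}}$ for some linear $[m,\geq m-a]$ code $\mathcal{C}_{\mathsf{col}}$ and $[n,\geq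 n-b]$ code $\mathcal{C}_{\mathsf{row}}$ over $\mathbb{F}$, and $\mathbf{H}_{\mathsf{global}}$ is an arbitrary $h\times mn$ matrix over $\mathbb{F}$; $\mathbb{C}_{m\times n}(a,b,h)$ is the set of all such codes (over any finite field). A code corrects an erasure pattern $\mathcal{E}\subseteq[m]\times[n]$ if no two distinct codewords agree on all positions outside $\mathcal{E}$. $\mathcal{E}$ is correctable in $T_{m\times n}(a,b,h)$ if some code in $\mathbb{C}_{m\times n}(a,b,h)$ corrects it; $\mathbb{E}_{m\times n}(a,b,h)$ is the set of such patterns and $\mathbb{E}^{\max}_{m\times n}(a,b,h)$ the set of correctable patterns not properly contained in another correctable pattern. *)

From HB Require Import structures.
From mathcomp Require Import all_boot all_order all_algebra all_field.
Set Implicit Arguments. Unset Strict Implicit. Unset Printing Implicit Defensive.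
Import GRing.Theory.
Local Open Scope ring_scope.

(* Vectors of F^{mn} are represented as m x n matrices (positions = grid
   'I_m * 'I_n, 0-indexed). *)

(* The tensor code C_col (x) C_row: row span of G1 (x) G2, i.e. the set of
   grid vectors sum_{k,l} c_{kl} G1(k,.) (outer) G2(l,.) = G1^T C G2. *)
Definition in_tensor (F : fieldType) (m n k1 k2 : nat)
  (G1 : 'M[F]_(k1, m)) (G2 : 'M[F]_(k2, n)) (x : 'M[F]_(m, n)) : Prop :=
  exists C : 'M[F]_(k1, k2), x = G1^T *m C *m G2.

Definition in_code (F : fieldType) (m n k1 k2 h : nat)
  (G1 : 'M[F]_(k1, m)) (G2 : 'M[F]_(k2, n)) (Hg : 'M[F]_(h, m * n))
  (x : 'M[F]_(m, n)) : Prop :=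
  in_tensor G1 G2 x /\ mxvec x *m Hg^T = 0.

Definition corrects (F : fieldType) (m n k1 k2 h : nat)
  (G1 : 'M[F]_(k1, m)) (G2 : 'M[F]_(k2, n)) (Hg : 'M[F]_(h, m * n))
  (E : {set 'I_m * 'I_n}) : Prop :=
  forall x y : 'M[F]_(m, n), in_code G1 G2 Hg x -> in_code G1 G2 Hg y ->
    (forall i j, (i, j) \notin E -> x i j = y i j) -> x = y.

(* E is correctable in T_{m x n}(a,b,h): some code of the topology, over some
   finite field, with dim C_col >= m - a and dim C_row >= n - b, corrects E. *)
Definition correctable (m n a b h : nat) (E : {set 'I_m * 'I_n}) : Prop :=
  exists (F : finFieldType) (k1 k2 : nat) (G1 : 'M[F]_(k1, m))
         (G2 : 'M[F]_(k2, n)) (Hg : 'M[F]_(h, m * n)),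
    (m - a <= \rank G1)%N /\ (n - b <= \rank G2)%N /\ corrects G1 G2 Hg E.

Definition max_correctable (m n a b h : nat) (E : {set 'I_m * 'I_n}) : Prop :=
  correctable a b h E /\
  forall E' : {set 'I_m * 'I_n}, correctable a b h E' -> E \subset E' -> E' = E.

(* Take row-free generator matrices G1, G2 of sizes (m - a) x m and
   (n - b) x n and put r = (m - a)(n - b).  Entry (i, j) of the tensor
   codeword G1^T C G2 is the inner product of C with a vector eval_vec (i, j)
   of F^r, so the codewords vanishing on a set X of positions form a space of
   dimension r - rank X, for the matroid of these vectors.  Counting against
   the h syndrome equations, E is correctable only if r - rank (~E) <= h;
   conversely, when rank (~E) = r, E together with any h further positions is
   corrected by global checks reading off those positions.  So the maximal
   patterns for h = 0 are the complements of bases, no correctable pattern has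
   more than m n - r + h elements, and every correctable E lies in a pattern
   of that size: extend a basis B0 of ~E to a basis B; E meets B inside
   B \ B0, which has r - rank (~E) <= h elements. *)

From HB Require Import structures.
From mathcomp Require Import all_boot all_order all_algebra all_field.
Set Implicit Arguments. Unset Strict Implicit. Unset Printing Implicit Defensive.
Import GRing.Theory.
From mathcomp Require Import zify.
Local Open Scope ring_scope.

Section SpanOfSubfamily.
Variables (F : fieldType) (T : finType) (k : nat) (v : T -> 'rV[F]_k).
Implicit Types X Y J : {set T}.

Definition span_set X : 'M[F]_k := (\sum_(p in X) <<v p>>)%MS.

Lemma span_set_sup p X : p \in X -> (v p <= span_set X)%MS.
Proof. by move=> pX; apply: (sumsmx_sup p) => //; rewrite genmxE. Qed.

Lemma span_setS X Y : X \subset Y -> (span_set X <= span_set Y)%MS.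
Proof.
by move=> sXY; apply/sumsmx_subP => p pX; rewrite genmxE span_set_sup ?(subsetP sXY).
Qed.

Lemma mxrank_span_set X : (\rank (span_set X) <= #|X|)%N.
Proof.
rewrite -sum1_card /span_set; elim/big_rec2: _ => [|p c A _ leAc]; first by rewrite mxrank0.
apply: leq_trans (mxrank_adds_leqif _ _) _.
by rewrite mxrank_gen; apply: leq_add (rank_leq_row _) leAc.
Qed.

Lemma span_set_orthoP (u : 'rV[F]_k) X :
  reflect (forall p, p \in X -> u *m (v p)^T = 0) (u *m (span_set X)^T == 0).
Proof.
apply: (iffP eqP) => [uX0 p pX | uv0].
  have /submxP[D ->] := span_set_sup pX.
  by rewrite trmx_mul mulmxA uX0 mul0mx.
have /sub_sums_genmxP[w ->] := submx_refl (span_set X).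
rewrite linear_sum mulmx_sumr big1 //= => p pX.
by rewrite trmx_mul mulmxA uv0 // mul0mx.
Qed.

Lemma extend_free_set J X : J \subset X -> \rank (span_set J) = #|J| ->
  exists2 B : {set T}, J \subset B &
    [/\ B \subset X, \rank (span_set B) = #|B| & \rank (span_set B) = \rank (span_set X)].
Proof.
have [d] := ubnP #|X :\: J|; elim: d J => // d IH J ltXJd sJX freeJ.
case: (pickP [pred p in X | ~~ (v p <= span_set J)%MS]) => [p /andP[pX vpJ] | spanJ].
  have pJ : p \notin J by apply: contra vpJ => /span_set_sup.
  have ltJpJ : (span_set J < span_set (p |: J))%MS.
    rewrite ltmxE span_setS ?subsetUr //=.
    by apply: contra vpJ => /(submx_trans (span_set_sup (setU11 p J))).
  have freepJ : \rank (span_set (p |: J)) = #|p |: J|.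
    apply/eqP; rewrite eqn_leq mxrank_span_set cardsU1 pJ add1n -freeJ.
    exact: rank_ltmx.
  have [|||B sJB] := IH (p |: J); last 1 first.
  - by exists B => //; apply: subset_trans sJB; apply: subsetUr.
  - move: ltXJd; rewrite (cardsD1 p (X :\: J)) in_setD pJ pX setUC -setDDl.
    by rewrite add1n ltnS.
  - by rewrite subUset sub1set pX.
  - exact: freepJ.
exists J => //; split => //; apply/eqP; rewrite eqn_leq mxrankS ?span_setS //=.
apply: mxrankS; apply/sumsmx_subP => p pX; rewrite genmxE.
by have := spanJ p; rewrite /= pX /= => /negbFE.
Qed.

Lemma exists_free_subset X : exists2 B : {set T}, B \subset X &
  \rank (span_set B) = #|B| /\ \rank (span_set B) = \rank (span_set X).
Proof.
have free0 : \rank (span_set set0) = #|(set0 : {set T})|.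
  by apply/eqP; rewrite eqn_leq mxrank_span_set cards0.
by have [B _ [sBX freeB rkB]] := extend_free_set (sub0set X) free0; exists B.
Qed.

End SpanOfSubfamily.

Lemma mxrank_disjoint_le (F : fieldType) m1 m2 n (A : 'M[F]_(m1, n)) (B : 'M_(m2, n)) :
  (forall w : 'rV_n, (w <= A)%MS -> (w <= B)%MS -> w = 0) -> (\rank A + \rank B <= n)%N.
Proof.
move=> disjAB; rewrite -mxrank_disjoint_sum ?rank_leq_col //.
apply/eqP; rewrite -submx0; apply/row_subP => i.
rewrite (disjAB (row i (A :&: B)%MS)) ?sub0mx //.
  by apply: submx_trans (row_sub i _) (capmxSl _ _).
by apply: submx_trans (row_sub i _) (capmxSr _ _).
Qed.

Lemma exists_row_free_submx (F : fieldType) k m r (G : 'M[F]_(k, m)) :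
  (r <= \rank G)%N -> exists2 G' : 'M[F]_(r, m), row_free G' & (G' <= G)%MS.
Proof.
move=> leRG; exists (pid_mx r *m row_base G).
  by rewrite /row_free mxrankMfree ?row_base_free // rank_pid_mx.
by apply: submx_trans (submxMl _ _) _; rewrite eq_row_base.
Qed.

Section TensorCode.
Variables (F : fieldType) (m n r1 r2 : nat) (G1 : 'M[F]_(r1, m)) (G2 : 'M[F]_(r2, n)).
Implicit Types (C : 'M[F]_(r1, r2)) (X : {set 'I_m * 'I_n}).

Definition tensor_word C : 'M[F]_(m, n) := G1^T *m C *m G2.

Definition eval_vec (p : 'I_m * 'I_n) : 'rV[F]_(r1 * r2) :=
  mxvec (col p.1 G1 *m (col p.2 G2)^T).

Lemma tensor_wordE C i j : tensor_word C i j = (mxvec C *m (eval_vec (i, j))^T) 0 0.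
Proof.
have := mxvec_dotmul C (col i G1)^T (col j G2)^T.
rewrite !trmxK => /(congr1 (fun M : 'M_1 => M^T 0 0)); rewrite trmx_mul trmxK /=.
rewrite [RHS]mxE => ->; rewrite tr_col -row_mul !mxE.
by apply: eq_bigr => l _; rewrite !mxE.
Qed.

Definition vanishing_space X : 'M[F]_(r1 * r2) := kermx (span_set eval_vec X)^T.

Lemma vanishing_spaceP X C :
  reflect (forall p, p \in X -> tensor_word C p.1 p.2 = 0)
          (mxvec C <= vanishing_space X)%MS.
Proof.
rewrite sub_kermx; apply: (iffP (span_set_orthoP _ _ _)) => C0 p pX.
  by rewrite tensor_wordE -surjective_pairing C0 // mxE.
by apply/rowP => i; rewrite ord1 [RHS]mxE -(C0 p pX) tensor_wordE -surjective_pairing.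
Qed.

Lemma mxrank_vanishing_space X :
  \rank (vanishing_space X) = (r1 * r2 - \rank (span_set eval_vec X))%N.
Proof. by rewrite mxrank_ker mxrank_tr. Qed.

Lemma tensor_word_inj : row_free G1 -> row_free G2 -> injective tensor_word.
Proof.
move=> free1 free2 C C' /(row_free_inj free2) /(congr1 trmx).
by rewrite !trmx_mul trmxK => /(row_free_inj free1) /trmx_inj.
Qed.

Lemma rank_span_setT : row_free G1 -> row_free G2 ->
  \rank (span_set eval_vec setT) = (r1 * r2)%N.
Proof.
move=> free1 free2; have V0 : vanishing_space setT = 0.
  apply/eqP; rewrite -submx0; apply/row_subP => i; set w := row i _.
  have /vanishing_spaceP vanish : (mxvec (vec_mx w) <= vanishing_space setT)%MS.
    by rewrite vec_mxK row_sub.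
  suff /(tensor_word_inj free1 free2) w0 : tensor_word (vec_mx w) = tensor_word 0.
    by rewrite -[w]vec_mxK w0 linear0 sub0mx.
  by apply/matrixP => x y; rewrite (vanish (x, y)) ?inE // /tensor_word mulmx0 mul0mx mxE.
apply/eqP; rewrite eqn_leq rank_leq_col -subn_eq0 -mxrank_vanishing_space V0.
by rewrite mxrank0.
Qed.

End TensorCode.

Lemma exists_set_between (T : finType) (J B : {set T}) k :
  J \subset B -> (#|J| <= k <= #|B|)%N ->
  exists I : {set T}, [/\ J \subset I, I \subset B & #|I| = k].
Proof.
elim: k => [|k IH] sJB /andP[leJk leKB].
  by exists J; split => //; apply/eqP; rewrite -leqn0.
rewrite leq_eqVlt in leJk; case/orP: leJk => [/eqP cardJ | ltJk]; first by exists J.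
have leJkB : (#|J| <= k <= #|B|)%N by rewrite -ltnS ltJk ltnW.
have [I [sJI sIB cardI]] := IH sJB leJkB.
have /subsetPn[p pB pI] : ~~ (B \subset I).
  by apply: contraTN leKB => /subset_leq_card; rewrite cardI -ltnNge ltnS.
exists (p |: I); split; last by rewrite cardsU1 pI cardI.
- exact: subset_trans sJI (subsetUr _ _).
- by rewrite subUset sub1set pB sIB.
Qed.

Section Topology.
Variables (m n a b : nat).
Implicit Types (E I : {set 'I_m * 'I_n}) (h : nat).
Local Notation r := ((m - a) * (n - b))%N.

Lemma correctable_rank_bound h E : correctable a b h E ->
  exists (F : finFieldType) (G1 : 'M[F]_(m - a, m)) (G2 : 'M[F]_(n - b, n)),
    [/\ row_free G1, row_free G2 & (r <= \rank (span_set (eval_vec G1 G2) (~: E)) + h)%N].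
Proof.
case=> F [k1 [k2 [G1 [G2 [Hg [rkG1 [rkG2 corE]]]]]]].
have [G1' free1 /submxP[W1 defG1']] := exists_row_free_submx rkG1.
have [G2' free2 /submxP[W2 defG2']] := exists_row_free_submx rkG2.
exists F, G1', G2'; split => //.
pose syndrome := lin_mx (mulmxr G2' \o mulmx G1'^T) *m Hg^T.
have disj : forall w : 'rV_r, (w <= vanishing_space G1' G2' (~: E))%MS ->
    (w <= kermx syndrome)%MS -> w = 0.
  move=> w; rewrite -(vec_mxK w); move: (vec_mx w) => C /vanishing_spaceP vanish.
  rewrite sub_kermx mulmxA mul_rV_lin /= mxvecK => /eqP syn0.
  suff /(tensor_word_inj free1 free2) -> : tensor_word G1' G2' C = tensor_word G1' G2' 0.
    by rewrite linear0.
  rewrite /tensor_word mulmx0 mul0mx; apply: corE.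
  - split; last exact: syn0.
    by exists (W1^T *m C *m W2); rewrite defG1' defG2' trmx_mul !mulmxA.
  - by split; [exists 0; rewrite mulmx0 mul0mx | rewrite linear0 mul0mx].
  - by move=> i j ijE; rewrite [RHS]mxE; apply: (vanish (i, j)); rewrite inE.
have := mxrank_disjoint_le disj; rewrite mxrank_vanishing_space mxrank_ker.
have := rank_leq_col syndrome; have := rank_leq_col (span_set (eval_vec G1' G2') (~: E)).
lia.
Qed.

Lemma correctable_card h E : correctable a b h E -> (#|E| + r <= m * n + h)%N.
Proof.
case/correctable_rank_bound=> F [G1 [G2 [_ _ rankE]]].
have := cardsC E; rewrite card_prod !card_ord => <-.
rewrite -addnA leq_add2l (leq_trans rankE) // leq_add2r.
exact: mxrank_span_set.
Qed.

Lemma max_correctable_of_card h E : correctable a b h E ->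
  (m * n + h <= #|E| + r)%N -> max_correctable a b h E.
Proof.
move=> corE leE; split => // E' corE' sEE'; apply/eqP; rewrite eq_sym eqEcard sEE' /=.
by rewrite -(leq_add2r r) (leq_trans (correctable_card corE')).
Qed.

Lemma correctable_of_spanning (F : finFieldType) (G1 : 'M[F]_(m - a, m))
    (G2 : 'M[F]_(n - b, n)) E I :
  row_free G1 -> row_free G2 -> \rank (span_set (eval_vec G1 G2) (~: E)) = r ->
  correctable a b #|I| (E :|: I).
Proof.
move=> free1 free2 spanE.
(* The global checks read off the positions of I, forcing codewords to vanish there. *)
pose Hg : 'M[F]_(#|I|, m * n) :=
  \matrix_s delta_mx 0 (mxvec_index (enum_val s).1 (enum_val s).2).
have vanish_I x : mxvec x *m Hg^T = 0 -> forall p, p \in I -> x p.1 p.2 = 0.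
  move=> syn0 p pI; have := congr1 (fun y : 'rV_#|I| => y 0 (enum_rank_in pI p)) syn0.
  rewrite !mxE (bigD1 (mxvec_index p.1 p.2)) //= big1 ?addr0.
    by rewrite !mxE enum_rankK_in // !eqxx mulr1 mxvecE.
  by move=> t /negbTE tp; rewrite !mxE enum_rankK_in // tp andbF mulr0.
have V0 : vanishing_space G1 G2 (~: E) = 0.
  by apply/eqP; rewrite -mxrank_eq0 mxrank_vanishing_space spanE subnn.
exists F, (m - a)%N, (n - b)%N, G1, G2, Hg.
split; [by rewrite (eqP free1) | split; [by rewrite (eqP free2) |]].
move=> _ _ [[Cx ->] synx] [[Cy ->] syny] agree.
have : (mxvec (Cx - Cy) <= vanishing_space G1 G2 (~: E))%MS.
  apply/vanishing_spaceP => p; rewrite inE => pE.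
  rewrite /tensor_word mulmxBr mulmxBl [LHS]mxE [X in _ + X]mxE.
  case pI: (p \in I); first by rewrite (vanish_I _ synx p pI) (vanish_I _ syny p pI) subrr.
  by rewrite agree ?subrr // -surjective_pairing !inE negb_or pE pI.
by rewrite V0 submx0 mxvec_eq0 subr_eq0 => /eqP ->.
Qed.

Lemma max_correctable0_compl_basis (F : finFieldType) (G1 : 'M[F]_(m - a, m))
    (G2 : 'M[F]_(n - b, n)) B :
  row_free G1 -> row_free G2 -> \rank (span_set (eval_vec G1 G2) B) = #|B| ->
  #|B| = r -> max_correctable a b 0 (~: B).
Proof.
move=> free1 free2 freeB cardB.
have corB : correctable a b 0 (~: B).
  have := correctable_of_spanning (E := ~: B) set0 free1 free2.
  by rewrite setCK freeB cardB cards0 setU0; apply.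
apply: max_correctable_of_card corB _.
by have := cardsC B; rewrite card_prod !card_ord cardB addnC addn0 => ->.
Qed.

Lemma correctable_sub_max_union h E : correctable a b h E -> (h <= r)%N ->
  exists E' I, [/\ max_correctable a b 0 E', I \subset ~: E', #|I| = h,
                   correctable a b h (E' :|: I) & E \subset E' :|: I].
Proof.
move=> corE leHr.
have [F [G1 [G2 [free1 free2 rankE]]]] := correctable_rank_bound corE.
have [B0 sB0E [freeB0 rkB0]] := exists_free_subset (eval_vec G1 G2) (~: E).
have [B sB0B [_ freeB]] := extend_free_set (subsetT B0) freeB0.
rewrite rank_span_setT // => rkB.
have cardB : #|B| = r by rewrite -freeB.
have cardEB : (#|E :&: B| <= h <= #|B|)%N.
  rewrite cardB leHr andbT; have sEBB0 : E :&: B \subset B :\: B0.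
    rewrite setDE subsetI subsetIr /=; apply: subset_trans (subsetIl E B) _.
    by rewrite subsetC.
  apply: leq_trans (subset_leq_card sEBB0) _.
  by rewrite cardsDS // cardB -freeB0 rkB0 leq_subLR.
have [I [sEBI sIB cardI]] := exists_set_between (subsetIr E B) cardEB.
exists (~: B), I; split => //.
- exact: max_correctable0_compl_basis free1 free2 freeB cardB.
- by rewrite setCK.
- by rewrite -cardI; apply: correctable_of_spanning free1 free2 _; rewrite setCK freeB.
apply/subsetP => p pE; rewrite !inE; case pB: (p \in B) => //=.
by apply: (subsetP sEBI); rewrite inE pE pB.
Qed.

Lemma max_correctable_union E' I : max_correctable a b 0 E' -> I \subset ~: E' ->
  max_correctable a b #|I| (E' :|: I).
Proof.
case=> corE' maxE' sIE'.
have [F [G1 [G2 [free1 free2 rankE']]]] := correctable_rank_bound corE'.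
have [B sBE' [freeB rkB]] := exists_free_subset (eval_vec G1 G2) (~: E').
have cardB : #|B| = r.
  apply/eqP; rewrite -freeB rkB eqn_leq rank_leq_col.
  by rewrite addn0 in rankE'.
have defE' : ~: B = E'.
  apply: maxE'; first exact: (max_correctable0_compl_basis free1 free2 freeB cardB).1.
  by rewrite subsetC.
apply: max_correctable_of_card.
  by apply: correctable_of_spanning free1 free2 _; rewrite -rkB freeB.
have E'I0 : E' :&: I = set0.
  by apply/disjoint_setI0; rewrite disjoint_sym disjoints_subset.
have := cardsUI E' I; rewrite E'I0 cards0 addn0 => ->.
by have := cardsC B; rewrite card_prod !card_ord cardB defE' => <-; rewrite [leqRHS]addnC addnA.
Qed.

End Topology.

Theorem theorem2 (m n a b h : nat) :
  (a < m)%N -> (b < n)%N ->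
  (h <= (m - a) * (n - b) - maxn (m - a) (n - b))%N ->
  forall E : {set 'I_m * 'I_n},
    max_correctable a b h E <->
    exists E' : {set 'I_m * 'I_n}, exists I : {set 'I_m * 'I_n},
      [/\ max_correctable a b 0 E', I \subset ~: E', #|I| = h & E = E' :|: I].
Proof.
(* Only h <= (m - a) * (n - b) is needed. *)
move=> _ _ /leq_trans/(_ (leq_subr _ _)) leHr E; split.
- case=> corE maxE.
  have [E' [I [maxE' sIE' cardI corE'I sEE'I]]] := correctable_sub_max_union corE leHr.
  by exists E', I; split => //; apply/esym/maxE.
- case=> E' [I [maxE' sIE' <- ->]].
  exact: max_correctable_union.
Qed.
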